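(* If $0<|a|<1$ then $a\in\mathcal{E}$. If $1<|a|\le2$ then $a\in\mathcal{B}$. The set $\mathcal{B}$ is bounded.
   Context: $B_a(z)=z^3\frac{z-a}{1-\bar a z}$, with superattracting fixed points $0,\infty$ and basins $A(0),A(\infty)$. For $a\neq0$, $|a|\neq1$, the free critical points are $c_\pm=\frac{a}{3|a|^2}\left(2+|a|^2\pm\sqrt{(|a|^2-4)(|a|^2-1)}\right)$ (square root of a negative $x$ meaning $i\sqrt{-x}$). A parameter $a$ ($|a|\neq1$) is escaping if $c_+\in A(0)\cup A(\infty)$; $\mathcal{E}$ is the set of escaping parameters and $\mathcal{B}$ is the set of non-escaping parameters ($|a|\neq 1$, $c_+\notin A(0)\cup A(\infty)$). *)

From Stdlib Require Import Reals Lra.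
Open Scope R_scope.

Definition Cx : Type := (R * R)%type.
Definition C0 : Cx := (0, 0).
Definition C1 : Cx := (1, 0).
Definition Cadd (z w : Cx) : Cx := (fst z + fst w, snd z + snd w).
Definition Csub (z w : Cx) : Cx := (fst z - fst w, snd z - snd w).
Definition Cmul (z w : Cx) : Cx :=
  (fst z * fst w - snd z * snd w, fst z * snd w + snd z * fst w).
Definition Cnorm2 (z : Cx) : R := fst z * fst z + snd z * snd z.
Definition Cinv (z : Cx) : Cx := (fst z / Cnorm2 z, - snd z / Cnorm2 z).
Definition Cdiv (z w : Cx) : Cx := Cmul z (Cinv w).
Definition Cconj (z : Cx) : Cx := (fst z, - snd z).
Definition Cscale (r : R) (z : Cx) : Cx := (r * fst z, r * snd z).
Definition Cnorm (z : Cx) : R := sqrt (Cnorm2 z).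

Definition Ceq_dec (z w : Cx) : {z = w} + {z <> w}.
Proof.
  destruct z as [x y], w as [u v].
  destruct (Req_EM_T x u) as [e1|n1]; [destruct (Req_EM_T y v) as [e2|n2]|].
  - left; subst; reflexivity.
  - right; intro H; inversion H; contradiction.
  - right; intro H; inversion H; contradiction.
Defined.

(* Points of the Riemann sphere: Some z is z in Cx, None is infinity. *)
Definition Csphere : Type := option Cx.

(* B_a(z) = z^3 (z - a) / (1 - conj(a) z), extended to the Riemann sphere:
   B_a(infinity) = infinity, and the pole 1/conj(a) is sent to infinity
   (for |a| <> 1 the numerator does not vanish there). *)
Definition Bmap (a : Cx) (w : Csphere) : Csphere :=
  match w with
  | None => None
  | Some z =>
      let d := Csub C1 (Cmul (Cconj a) z) in
      if Ceq_dec d C0 then None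
      else Some (Cdiv (Cmul (Cmul z (Cmul z z)) (Csub z a)) d)
  end.

Definition orbit (a : Cx) (n : nat) (w : Csphere) : Csphere :=
  Nat.iter n (Bmap a) w.

Definition in_basin0 (a : Cx) (w : Csphere) : Prop :=
  forall eps : R, 0 < eps -> exists N : nat, forall n : nat, (N <= n)%nat ->
    exists z : Cx, orbit a n w = Some z /\ Cnorm z < eps.

Definition in_basinInf (a : Cx) (w : Csphere) : Prop :=
  forall M : R, exists N : nat, forall n : nat, (N <= n)%nat ->
    match orbit a n w with
    | None => True
    | Some z => M < Cnorm z
    end.

(* The free critical point c_+ (for a <> 0, |a| <> 1):
   c_+ = a/(3|a|^2) (2 + |a|^2 + sqrt((|a|^2-4)(|a|^2-1))),
   with sqrt x := i sqrt(-x) for x < 0. *)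
Definition c_plus (a : Cx) : Cx :=
  let r := Cnorm2 a in
  let D := (r - 4) * (r - 1) in
  let s : Cx := if Rle_dec 0 D then (sqrt D, 0) else (0, sqrt (- D)) in
  Cmul (Cscale (/ (3 * r)) a) (Cadd (2 + r, 0) s).

(* Escaping parameters E and non-escaping parameters B. *)
Definition escaping (a : Cx) : Prop :=
  a <> C0 /\ Cnorm a <> 1 /\
  (in_basin0 a (Some (c_plus a)) \/ in_basinInf a (Some (c_plus a))).

Definition nonescaping (a : Cx) : Prop :=
  a <> C0 /\ Cnorm a <> 1 /\
  ~ (in_basin0 a (Some (c_plus a)) \/ in_basinInf a (Some (c_plus a))).

(* The identity |1 - conj(a) z|^2 - |z - a|^2 = (1 - |a|^2)(1 - |z|^2) controls B_a.
   For 1 < |a| <= 2 the critical point c_+ lies on the unit circle, which B_a maps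
   to itself, so the orbit of c_+ never approaches 0 or infinity.  For |a| < 1,
   c_+ is a real multiple of a lying outside the closed unit disk, where
   |B_a(z)| >= |z|^3.  For |a| > 100, c_+ = t a with 1/2 <= t <= 2/3; its image
   satisfies |w| >= 2|a|, and on that region |B_a(z)| >= 2|z|. *)
From Pilot Require Import Defs.
From Stdlib Require Import Reals Lra Lia Psatz.
Open Scope R_scope.

Lemma Cnorm2_nonneg z : 0 <= Cnorm2 z.
Proof. destruct z; unfold Cnorm2; simpl; nra. Qed.

Lemma Cnorm2_pos z : z <> Defs.C0 -> 0 < Cnorm2 z.
Proof.
  destruct z as [x y]; unfold Cnorm2; simpl; intro Hz.
  destruct (Req_dec x 0), (Req_dec y 0); subst; [now elim Hz | nra ..].
Qed.

Lemma Cnorm2_mul z w : Cnorm2 (Cmul z w) = Cnorm2 z * Cnorm2 w.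
Proof. destruct z, w; unfold Cnorm2, Cmul; simpl; ring. Qed.

Lemma Cnorm2_inv z : 0 < Cnorm2 z -> Cnorm2 (Cinv z) = / Cnorm2 z.
Proof. destruct z; unfold Cinv, Cnorm2; simpl; intro; field; lra. Qed.

Lemma Cnorm2_Cscale t z : Cnorm2 (Cscale t z) = t * t * Cnorm2 z.
Proof. destruct z; unfold Cnorm2, Cscale; simpl; ring. Qed.

Lemma Cnorm_sqr z : Cnorm z * Cnorm z = Cnorm2 z.
Proof. apply sqrt_sqrt, Cnorm2_nonneg. Qed.

Lemma Cnorm_nonneg z : 0 <= Cnorm z.
Proof. apply sqrt_pos. Qed.

Lemma Cnorm_C0 : Cnorm Defs.C0 = 0.
Proof. unfold Cnorm, Cnorm2; simpl; rewrite Rmult_0_l, Rplus_0_l; exact sqrt_0. Qed.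

Lemma Cnorm_gt_of_Cnorm2 M z : M * M < Cnorm2 z -> M < Cnorm z.
Proof. intro H; pose proof (Cnorm_sqr z); pose proof (Cnorm_nonneg z); nra. Qed.

Lemma Cnorm2_one_sub_conj_mul a z :
  Cnorm2 (Csub Defs.C1 (Cmul (Cconj a) z)) - Cnorm2 (Csub z a) =
  (1 - Cnorm2 a) * (1 - Cnorm2 z).
Proof. destruct a, z; unfold Cnorm2, Csub, Cmul, Cconj, Defs.C1; simpl; ring. Qed.

Lemma Bmap_Some_Cnorm2 a z w : Bmap a (Some z) = Some w ->
  0 < Cnorm2 (Csub Defs.C1 (Cmul (Cconj a) z)) /\
  Cnorm2 w * Cnorm2 (Csub Defs.C1 (Cmul (Cconj a) z)) =
  Cnorm2 z * Cnorm2 z * Cnorm2 z * Cnorm2 (Csub z a).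
Proof.
  unfold Bmap; cbv zeta; destruct Ceq_dec as [_ | Hd]; intro Hw; [discriminate |].
  injection Hw as <-; pose proof (Cnorm2_pos _ Hd) as HD; split; [exact HD |].
  unfold Cdiv; rewrite Cnorm2_mul, Cnorm2_inv, !Cnorm2_mul by exact HD.
  field; lra.
Qed.

Lemma orbit_None a n : orbit a n None = None.
Proof. induction n as [| n IH]; [reflexivity |]; simpl; now rewrite IH. Qed.

Lemma orbit_succ a n w : orbit a (S n) w = orbit a n (Bmap a w).
Proof.
  induction n as [| n IH]; [reflexivity |].
  change (orbit a (S (S n)) w) with (Bmap a (orbit a (S n) w)); now rewrite IH.
Qed.

Lemma in_basinInf_of_Bmap a w : in_basinInf a (Bmap a w) -> in_basinInf a w.
Proof.
  intros H M; destruct (H M) as [N HN]; exists (S N); intros [| n] Hn; [lia |].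
  rewrite orbit_succ; apply HN; lia.
Qed.

Lemma in_basinInf_None a : in_basinInf a None.
Proof. intros M; exists 0%nat; intros n _; now rewrite orbit_None. Qed.

Lemma in_basinInf_of_invariant_growth a (P : Cx -> Prop) d : 0 < d ->
  (forall z w, P z -> Bmap a (Some z) = Some w -> P w /\ Cnorm2 z + d <= Cnorm2 w) ->
  forall z0, P z0 -> in_basinInf a (Some z0).
Proof.
  intros Hd Hstep z0 Hz0.
  assert (Hgrowth : forall n, match orbit a n (Some z0) with
    | None => True
    | Some z => P z /\ Cnorm2 z0 + INR n * d <= Cnorm2 z end).
  { induction n as [| n IH]; [simpl; split; [exact Hz0 | lra] |].
    change (orbit a (S n) (Some z0)) with (Bmap a (orbit a n (Some z0))).
    destruct (orbit a n (Some z0)) as [z |]; [| exact I].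
    destruct IH as [Pz Hz]; destruct (Bmap a (Some z)) as [w |] eqn:Hw; [| exact I].
    destruct (Hstep z w Pz Hw); rewrite S_INR; split; [assumption | lra]. }
  intros M; destruct (INR_unbounded (M * M / d)) as [N HN]; exists N; intros n Hn.
  specialize (Hgrowth n); destruct (orbit a n (Some z0)) as [z |]; [| exact I].
  destruct Hgrowth as [_ Hz]; apply Cnorm_gt_of_Cnorm2.
  assert (M * M < INR n * d).
  { apply le_INR in Hn; replace (M * M) with (M * M / d * d) by (field; lra); nra. }
  pose proof (Cnorm2_nonneg z0); lra.
Qed.

Lemma not_in_basins_of_orbit_on_circle a w :
  (forall n, exists z, orbit a n w = Some z /\ Cnorm2 z = 1) ->
  ~ (in_basin0 a w \/ in_basinInf a w).
Proof.
  assert (Hunit : forall z, Cnorm2 z = 1 -> Cnorm z = 1)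
    by (intros z Hz; unfold Cnorm; rewrite Hz; exact sqrt_1).
  intros Horb [H0 | HInf].
  - destruct (H0 (1/2)) as [N HN]; [lra |]; destruct (HN N (le_n N)) as [z [Hz Hsmall]].
    destruct (Horb N) as [z' [Hz' Hcirc]]; rewrite Hz in Hz'; injection Hz' as ->.
    rewrite Hunit in Hsmall by exact Hcirc; lra.
  - destruct (HInf 2) as [N HN]; specialize (HN N (le_n N)).
    destruct (Horb N) as [z [Hz Hcirc]]; rewrite Hz, Hunit in HN by exact Hcirc; lra.
Qed.

Lemma c_plus_real_discriminant a :
  0 < Cnorm2 a -> 0 <= (Cnorm2 a - 4) * (Cnorm2 a - 1) ->
  c_plus a = Cscale ((2 + Cnorm2 a + sqrt ((Cnorm2 a - 4) * (Cnorm2 a - 1)))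
                     / (3 * Cnorm2 a)) a.
Proof.
  intros Hr HD; unfold c_plus; cbv zeta.
  destruct (Rle_dec 0 _) as [_ | Hneg]; [| contradiction].
  destruct a; unfold Cmul, Cscale, Cadd; simpl; f_equal; field; lra.
Qed.

Lemma c_plus_outside_disk a : 0 < Cnorm2 a < 1 -> 1 < Cnorm2 (c_plus a).
Proof.
  intros [Hr0 Hr1]; rewrite c_plus_real_discriminant, Cnorm2_Cscale by nra.
  set (r := Cnorm2 a) in *; set (s := sqrt ((r - 4) * (r - 1))).
  assert (0 <= s) by apply sqrt_pos.
  replace ((2 + r + s) / (3 * r) * ((2 + r + s) / (3 * r)) * r)
    with ((2 + r + s) * (2 + r + s) / (9 * r)) by (field; lra).
  apply Rmult_lt_reg_r with (9 * r); [lra |].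
  unfold Rdiv; rewrite Rmult_assoc, Rinv_l by lra; nra.
Qed.

(* Here D <= 0, so |2 + |a|^2 + i sqrt(-D)|^2 = (2 + |a|^2)^2 - D = 9 |a|^2. *)
Lemma c_plus_on_circle a : 1 < Cnorm2 a <= 4 -> Cnorm2 (c_plus a) = 1.
Proof.
  intros Hr; unfold c_plus; cbv zeta.
  rewrite Cnorm2_mul, Cnorm2_Cscale; set (r := Cnorm2 a) in *.
  destruct (Rle_dec 0 ((r - 4) * (r - 1))) as [HD | HD].
  - replace ((r - 4) * (r - 1)) with 0 by nra; rewrite sqrt_0.
    unfold Cnorm2, Cadd; simpl.
    replace ((2 + r + 0) * (2 + r + 0) + (0 + 0) * (0 + 0)) with (9 * r) by nra.
    field; lra.
  - pose proof (sqrt_sqrt (- ((r - 4) * (r - 1)))) as Hs.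
    unfold Cnorm2, Cadd; simpl; rewrite Rplus_0_l, Hs by lra.
    field; lra.
Qed.

Lemma c_plus_far a : 576 <= Cnorm2 a ->
  exists t, 1/2 <= t <= 2/3 /\ c_plus a = Cscale t a.
Proof.
  intros Hr; rewrite c_plus_real_discriminant by nra; set (r := Cnorm2 a) in *.
  eexists; split; [| reflexivity].
  assert (Hsqrt : forall u, 0 <= u -> u * u <= (r - 4) * (r - 1) ->
    u <= sqrt ((r - 4) * (r - 1))).
  { intros u Hu Hle; rewrite <- (sqrt_square u) by exact Hu; apply sqrt_le_1_alt, Hle. }
  assert (Hlo : r - 3 <= sqrt ((r - 4) * (r - 1))) by (apply Hsqrt; nra).
  assert (Hhi : sqrt ((r - 4) * (r - 1)) <= r - 2).
  { rewrite <- (sqrt_square (r - 2)) by lra; apply sqrt_le_1_alt; nra. }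
  assert (Ht : (2 + r + sqrt ((r - 4) * (r - 1))) / (3 * r) * (3 * r) =
                2 + r + sqrt ((r - 4) * (r - 1))) by (field; lra).
  split; nra.
Qed.

Lemma Bmap_unit_circle a z : Cnorm2 a <> 1 -> Cnorm2 z = 1 ->
  exists w, Bmap a (Some z) = Some w /\ Cnorm2 w = 1.
Proof.
  intros Ha Hz.
  assert (Heq : Cnorm2 (Csub Defs.C1 (Cmul (Cconj a) z)) = Cnorm2 (Csub z a)).
  { pose proof (Cnorm2_one_sub_conj_mul a z); rewrite Hz in *; lra. }
  assert (HN : 0 < Cnorm2 (Csub z a)).
  { apply Cnorm2_pos; intro Hza; apply Ha; rewrite <- Hz; f_equal.
    destruct z, a; unfold Csub, Defs.C0 in Hza; injection Hza as H1 H2.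
    f_equal; simpl in *; lra. }
  destruct (Bmap a (Some z)) as [w |] eqn:Hw.
  - exists w; split; [reflexivity |].
    destruct (Bmap_Some_Cnorm2 _ _ _ Hw) as [_ HW]; rewrite Hz, Heq in HW; nra.
  - exfalso; unfold Bmap in Hw; cbv zeta in Hw.
    destruct Ceq_dec as [Hd |]; [| discriminate].
    rewrite Hd in Heq; rewrite <- Heq in HN; unfold Cnorm2, Defs.C0 in HN; simpl in HN; lra.
Qed.

Lemma orbit_unit_circle a z : Cnorm2 a <> 1 -> Cnorm2 z = 1 ->
  forall n, exists w, orbit a n (Some z) = Some w /\ Cnorm2 w = 1.
Proof.
  intros Ha Hz n; induction n as [| n [w [Hw Hw1]]]; [now exists z |].
  destruct (Bmap_unit_circle a w Ha Hw1) as [w' [Hw' Hw'1]]; exists w'.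
  change (orbit a (S n) (Some z)) with (Bmap a (orbit a n (Some z))).
  now rewrite Hw.
Qed.

Lemma Bmap_Cnorm2_cube_le a z w : Cnorm2 a < 1 -> 1 <= Cnorm2 z ->
  Bmap a (Some z) = Some w -> Cnorm2 z * Cnorm2 z * Cnorm2 z <= Cnorm2 w.
Proof.
  intros Ha Hz Hw; destruct (Bmap_Some_Cnorm2 _ _ _ Hw) as [HD HW].
  pose proof (Cnorm2_one_sub_conj_mul a z) as Hid.
  set (D := Cnorm2 (Csub Defs.C1 (Cmul (Cconj a) z))) in *.
  set (N := Cnorm2 (Csub z a)) in *; set (s := Cnorm2 z) in *.
  assert (HDN : D <= N) by nra.
  apply Rmult_le_reg_r with D; [exact HD |]; rewrite HW.
  assert (0 <= s * s * s) by (repeat apply Rmult_le_pos; lra); nra.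
Qed.

Lemma Cnorm2_sub_ge a z : 4 * Cnorm2 a <= Cnorm2 z -> Cnorm2 a <= Cnorm2 (Csub z a).
Proof.
  destruct a as [a1 a2], z as [z1 z2]; unfold Cnorm2, Csub; simpl; intro Hs.
  set (x := a1 * z1 + a2 * z2); set (r := a1 * a1 + a2 * a2) in *.
  set (s := z1 * z1 + z2 * z2) in *.
  assert (Hcs : x * x <= r * s).
  { assert (Hlag : x * x + (a1 * z2 - a2 * z1) * (a1 * z2 - a2 * z1) = r * s)
      by (unfold x, r, s; ring).
    pose proof (Rle_0_sqr (a1 * z2 - a2 * z1)); unfold Rsqr in *; lra. }
  assert (0 <= r) by (unfold r; nra).
  assert (4 * (x * x) <= s * s) by nra.
  assert (2 * x <= s) by nra.
  replace ((z1 - a1) * (z1 - a1) + (z2 - a2) * (z2 - a2)) with (s - 2 * x + r)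
    by (unfold s, x, r; ring).
  lra.
Qed.

Lemma Bmap_Cnorm2_far a z w : 2 <= Cnorm2 a -> 4 * Cnorm2 a <= Cnorm2 z ->
  Bmap a (Some z) = Some w -> 4 * Cnorm2 z <= Cnorm2 w.
Proof.
  intros Ha Hz Hw; destruct (Bmap_Some_Cnorm2 _ _ _ Hw) as [HD HW].
  pose proof (Cnorm2_one_sub_conj_mul a z) as Hid.
  pose proof (Cnorm2_sub_ge a z Hz) as HNr.
  set (D := Cnorm2 (Csub Defs.C1 (Cmul (Cconj a) z))) in *.
  set (N := Cnorm2 (Csub z a)) in *; set (s := Cnorm2 z) in *.
  set (r := Cnorm2 a) in *.
  assert (HDN : D <= N * (1 + s)) by nra.
  assert (Hcube : s * s * s <= Cnorm2 w * (1 + s)).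
  { apply Rmult_le_reg_r with N; [lra |].
    assert (0 <= Cnorm2 w) by apply Cnorm2_nonneg; nra. }
  apply Rmult_le_reg_r with (1 + s); [lra | nra].
Qed.

Lemma Bmap_Cscale_far a t w : 576 <= Cnorm2 a -> 1/2 <= t <= 2/3 ->
  Bmap a (Some (Cscale t a)) = Some w -> 4 * Cnorm2 a <= Cnorm2 w.
Proof.
  intros Ha Ht Hw; destruct (Bmap_Some_Cnorm2 _ _ _ Hw) as [_ HW].
  replace (Cnorm2 (Csub Defs.C1 (Cmul (Cconj a) (Cscale t a))))
    with ((t * Cnorm2 a - 1) * (t * Cnorm2 a - 1)) in HW
    by (destruct a; unfold Cnorm2, Csub, Cmul, Cconj, Cscale, Defs.C1; simpl; ring).
  replace (Cnorm2 (Csub (Cscale t a) a)) with ((1 - t) * (1 - t) * Cnorm2 a) in HW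
    by (destruct a; unfold Cnorm2, Csub, Cscale; simpl; ring).
  rewrite Cnorm2_Cscale in HW; set (r := Cnorm2 a) in *; set (W := Cnorm2 w) in *.
  assert (HW0 : 0 <= W) by apply Cnorm2_nonneg.
  assert (Hlow : t * t * t * t * ((1 - t) * (1 - t)) * (r * r) <= W).
  { assert (Htr : 0 < t * t * (r * r)) by (apply Rmult_lt_0_compat; nra).
    apply Rmult_le_reg_r with (t * t * (r * r)); [exact Htr |].
    assert (HD : (t * r - 1) * (t * r - 1) <= t * t * (r * r)) by nra.
    apply Rle_trans with (W * ((t * r - 1) * (t * r - 1)));
      [rewrite HW; right; ring | apply Rmult_le_compat_l; lra]. }
  assert (Hcoef : 1/144 <= t * t * t * t * ((1 - t) * (1 - t))).
  { assert (1/4 <= t * t) by nra.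
    assert (1/16 <= t * t * (t * t)) by nra.
    assert (1/9 <= (1 - t) * (1 - t)) by nra.
    replace (t * t * t * t) with (t * t * (t * t)) by ring; nra. }
  nra.
Qed.

Lemma escaping_of_Cnorm_lt_1 a : 0 < Cnorm a < 1 -> escaping a.
Proof.
  intros Ha; pose proof (Cnorm_sqr a) as Hsqr.
  assert (Hr : 0 < Cnorm2 a < 1) by nra.
  split; [intro H0; rewrite H0, Cnorm_C0 in Ha; lra | split; [lra | right]].
  pose proof (c_plus_outside_disk a Hr) as Hc; set (s0 := Cnorm2 (c_plus a)) in *.
  apply (in_basinInf_of_invariant_growth a (fun z => s0 <= Cnorm2 z) (s0 - 1));
    [lra | | apply Rle_refl].
  intros z w Hz Hw; pose proof (Bmap_Cnorm2_cube_le a z w ltac:(lra) ltac:(lra) Hw).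
  split; nra.
Qed.

Lemma nonescaping_of_Cnorm_in_1_2 a : 1 < Cnorm a <= 2 -> nonescaping a.
Proof.
  intros Ha; pose proof (Cnorm_sqr a) as Hsqr.
  assert (Hr : 1 < Cnorm2 a <= 4) by nra.
  split; [intro H0; rewrite H0, Cnorm_C0 in Ha; lra | split; [lra |]].
  apply not_in_basins_of_orbit_on_circle, orbit_unit_circle;
    [lra | exact (c_plus_on_circle a Hr)].
Qed.

Lemma c_plus_escapes_of_Cnorm_gt_100 a : 100 < Cnorm a -> in_basinInf a (Some (c_plus a)).
Proof.
  intros Ha; pose proof (Cnorm_sqr a) as Hsqr.
  assert (Hr : 576 <= Cnorm2 a) by nra.
  destruct (c_plus_far a Hr) as [t [Ht ->]].
  apply in_basinInf_of_Bmap; destruct (Bmap a (Some (Cscale t a))) as [w |] eqn:Hw;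
    [| apply in_basinInf_None].
  apply (in_basinInf_of_invariant_growth a (fun z => 4 * Cnorm2 a <= Cnorm2 z) 1);
    [lra | | exact (Bmap_Cscale_far a t w Hr Ht Hw)].
  intros z w' Hz Hw'; pose proof (Bmap_Cnorm2_far a z w' ltac:(lra) Hz Hw').
  split; lra.
Qed.

Theorem mainTheorem10 :
  (forall a : Cx, 0 < Cnorm a < 1 -> escaping a) /\
  (forall a : Cx, 1 < Cnorm a <= 2 -> nonescaping a) /\
  (exists M : R, forall a : Cx, nonescaping a -> Cnorm a <= M).
Proof.
  split; [exact escaping_of_Cnorm_lt_1 |].
  split; [exact nonescaping_of_Cnorm_in_1_2 |].
  exists 100; intros a [_ [_ Hnot]].
  destruct (Rle_or_lt (Cnorm a) 100) as [Hle | Hgt]; [exact Hle |].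
  exfalso; apply Hnot; right; exact (c_plus_escapes_of_Cnorm_gt_100 a Hgt).
Qed.
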